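(* Let $(\mathcal{S},\mathcal{R})$ be a positive presentation and let $\curvearrowright_r'$ be the binary relation on words on $\mathcal{S}\cup\mathcal{S}^{-1}$ defined as $\curvearrowright_r$ except that in each step the words $u$ and $v$ are required to have length exactly $1$: that is, $\mathbf{w}\curvearrowright_r'\mathbf{w}'$ if $\mathbf{w}'$ is obtained from $\mathbf{w}$ by a finite sequence of steps each of which either deletes a subword $s^{-1}s$ with $s\in\mathcal{S}$, or replaces a subword $s^{-1}t$ with $s,t\in\mathcal{S}$ by a word $v'u'^{-1}$ ($u',v'\in\mathcal{S}^*$) such that $sv'=tu'$ is a relation of $\mathcal{R}$. Then $\curvearrowright_r'$ coincides with $\curvearrowright_r$.
   Context: A positive presentation is a pair $(\mathcal{S},\mathcal{R})$ where $\mathcal{S}$ is a nonempty set of letters and $\mathcal{R}$ is a family of relations $u=v$, i.e. unordered pairs $\{u,v\}$ of nonempty words in the free monoid $\mathcal{S}^*$. Let $\mathcal{S}^{-1}=\{s^{-1}:s\in\mathcal{S}\}$ be a disjoint copy of $\mathcal{S}$; for $u\in\mathcal{S}^*$, $u^{-1}$ is obtained by reversing the order of the letters of $u$ and replacing each $s$ by $s^{-1}$. Right reversing: for words $\mathbf{w},\mathbf{w}'$ on $\mathcal{S}\cup\mathcal{S}^{-1}$ we write $\mathbf{w}\curvearrowright_r\mathbf{w}'$ if $\mathbf{w}'$ is obtained from $\mathbf{w}$ by a finite (possibly empty) sequence of steps, each of which either deletes a subword $u^{-1}u$ with $u\in\mathcal{S}^*$ nonempty, or replaces a subword $u^{-1}v$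 with $u,v\in\mathcal{S}^*$ nonempty by a word $v'u'^{-1}$ with $u',v'\in\mathcal{S}^*$ such that $uv'=vu'$ is a relation of $\mathcal{R}$. *)

From Stdlib Require Import List Relations.
Import ListNotations.

(* A signed letter on S ∪ S^{-1}: [inl s] is s, [inr s] is s^{-1}. *)
Definition sletter (S : Type) : Type := (S + S)%type.

Definition posw {S : Type} (u : list S) : list (sletter S) := map inl u.

Definition invw {S : Type} (u : list S) : list (sletter S) := rev (map inr u).

(* A positive presentation: relations are given as a predicate on pairs of
   words; a relation x = y is unordered, so "x = y is a relation of R"
   means (x,y) or (y,x) is in the family. *)
Definition positive_presentation {S : Type} (R : list S * list S -> Prop) : Prop :=
  inhabited S /\ forall x y, R (x, y) -> x <> [] /\ y <> [].

Definition is_rel {S : Type} (R : list S * list S -> Prop) (x y : list S) : Prop :=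
  R (x, y) \/ R (y, x).

Inductive rstep {S : Type} (R : list S * list S -> Prop) :
    list (sletter S) -> list (sletter S) -> Prop :=
| rstep_del : forall (a b : list (sletter S)) (u : list S),
    u <> [] -> rstep R (a ++ invw u ++ posw u ++ b) (a ++ b)
| rstep_rev : forall (a b : list (sletter S)) (u v u' v' : list S),
    u <> [] -> v <> [] -> is_rel R (u ++ v') (v ++ u') ->
    rstep R (a ++ invw u ++ posw v ++ b) (a ++ posw v' ++ invw u' ++ b).

Inductive rstep1 {S : Type} (R : list S * list S -> Prop) :
    list (sletter S) -> list (sletter S) -> Prop :=
| rstep1_del : forall (a b : list (sletter S)) (s : S),
    rstep1 R (a ++ invw [s] ++ posw [s] ++ b) (a ++ b)
| rstep1_rev : forall (a b : list (sletter S)) (s t : S) (u' v' : list S),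
    is_rel R ([s] ++ v') ([t] ++ u') ->
    rstep1 R (a ++ invw [s] ++ posw [t] ++ b) (a ++ posw v' ++ invw u' ++ b).

Definition rrev {S : Type} (R : list S * list S -> Prop) := clos_refl_trans _ (rstep R).
Definition rrev1 {S : Type} (R : list S * list S -> Prop) := clos_refl_trans _ (rstep1 R).

(* A long reversing step u^{-1} v -> v' u'^{-1} with u = s u0 and v = t v0 is
   simulated by letter steps: reverse s^{-1} t using the same relation read as
   s (u0 v') = t (v0 u'), which yields u0^{-1} u0 v' u'^{-1} v0^{-1} v0, and then
   cancel the two factors u0^{-1} u0 and v0^{-1} v0 letter by letter.  The
   converse inclusion is immediate, a letter step being a step with |u| = |v| = 1. *)

From Stdlib Require Import List Relations.
Import ListNotations.

Lemma clos_refl_trans_incl {A : Type} (r1 r2 : relation A) :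
  inclusion A r1 (clos_refl_trans A r2) ->
  inclusion A (clos_refl_trans A r1) (clos_refl_trans A r2).
Proof.
  intros Hincl x y Hxy.
  induction Hxy as [x y Hstep | x | x y z _ IHxy _ IHyz].
  - exact (Hincl x y Hstep).
  - apply rt_refl.
  - exact (rt_trans _ _ x y z IHxy IHyz).
Qed.

Lemma invw_app {S : Type} (x y : list S) : invw (x ++ y) = invw y ++ invw x.
Proof. unfold invw. rewrite map_app, rev_app_distr. reflexivity. Qed.

Lemma posw_app {S : Type} (x y : list S) : posw (x ++ y) = posw x ++ posw y.
Proof. apply map_app. Qed.

Section LetterReversing.

Variables (S : Type) (R : list S * list S -> Prop).

Lemma rstep1_context (a b w w' : list (sletter S)) :
  rstep1 R w w' -> rstep1 R (a ++ w ++ b) (a ++ w' ++ b).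
Proof.
  intros [a0 b0 s | a0 b0 s t u' v' Hrel].
  - replace (a ++ (a0 ++ invw [s] ++ posw [s] ++ b0) ++ b)
      with ((a ++ a0) ++ invw [s] ++ posw [s] ++ (b0 ++ b))
      by (rewrite <- !app_assoc; reflexivity).
    replace (a ++ (a0 ++ b0) ++ b) with ((a ++ a0) ++ b0 ++ b)
      by (rewrite <- !app_assoc; reflexivity).
    apply rstep1_del.
  - replace (a ++ (a0 ++ invw [s] ++ posw [t] ++ b0) ++ b)
      with ((a ++ a0) ++ invw [s] ++ posw [t] ++ (b0 ++ b))
      by (rewrite <- !app_assoc; reflexivity).
    replace (a ++ (a0 ++ posw v' ++ invw u' ++ b0) ++ b)
      with ((a ++ a0) ++ posw v' ++ invw u' ++ (b0 ++ b))
      by (rewrite <- !app_assoc; reflexivity).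
    now apply rstep1_rev.
Qed.

Lemma rrev1_context (a b w w' : list (sletter S)) :
  rrev1 R w w' -> rrev1 R (a ++ w ++ b) (a ++ w' ++ b).
Proof.
  intros Hww'.
  induction Hww' as [w w' Hstep | w | w1 w2 w3 _ IH12 _ IH23].
  - apply rt_step, rstep1_context, Hstep.
  - apply rt_refl.
  - exact (rt_trans _ _ _ _ _ IH12 IH23).
Qed.

Lemma rstep1_letter_rev (s t : S) (u' v' : list S) :
  is_rel R ([s] ++ v') ([t] ++ u') ->
  rstep1 R (invw [s] ++ posw [t]) (posw v' ++ invw u').
Proof.
  intros Hrel.
  pose proof (rstep1_rev R [] [] s t u' v' Hrel) as Hstep.
  now rewrite !app_nil_r in Hstep.
Qed.

Lemma rrev1_cancel (u : list S) : rrev1 R (invw u ++ posw u) [].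
Proof.
  induction u as [|s u IH]; [apply rt_refl|].
  apply rt_trans with (invw u ++ posw u); [|exact IH].
  change (s :: u) with ([s] ++ u).
  rewrite invw_app, posw_app, <- !app_assoc.
  apply rt_step, (rstep1_del R (invw u) (posw u) s).
Qed.

Lemma rrev1_rev (u v u' v' : list S) :
  u <> [] -> v <> [] -> is_rel R (u ++ v') (v ++ u') ->
  rrev1 R (invw u ++ posw v) (posw v' ++ invw u').
Proof.
  destruct u as [|s u0]; [congruence|]; destruct v as [|t v0]; [congruence|].
  intros _ _ Hrel.
  apply rt_trans with
    ((invw u0 ++ posw u0) ++ (posw v' ++ invw u') ++ (invw v0 ++ posw v0)).
  - replace (invw (s :: u0) ++ posw (t :: v0))
      with (invw u0 ++ (invw [s] ++ posw [t]) ++ posw v0)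
      by (change (s :: u0) with ([s] ++ u0); change (t :: v0) with ([t] ++ v0);
          rewrite invw_app, posw_app, <- !app_assoc; reflexivity).
    replace ((invw u0 ++ posw u0) ++ (posw v' ++ invw u') ++ (invw v0 ++ posw v0))
      with (invw u0 ++ (posw (u0 ++ v') ++ invw (v0 ++ u')) ++ posw v0)
      by (rewrite invw_app, posw_app, <- !app_assoc; reflexivity).
    apply rt_step, rstep1_context, rstep1_letter_rev, Hrel.
  - set (r := posw v' ++ invw u').
    apply rt_trans with (r ++ (invw v0 ++ posw v0)).
    + apply (rrev1_context [] (r ++ invw v0 ++ posw v0) _ []), rrev1_cancel.
    + pose proof (rrev1_context r [] _ _ (rrev1_cancel v0)) as Hcancel.
      now rewrite !app_nil_r in Hcancel.
Qed.

Lemma rstep_rrev1 (w w' : list (sletter S)) : rstep R w w' -> rrev1 R w w'.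
Proof.
  intros [a b u Hu | a b u v u' v' Hu Hv Hrel].
  - rewrite app_assoc with (l := invw u).
    apply (rrev1_context a b (invw u ++ posw u) []), rrev1_cancel.
  - rewrite app_assoc with (l := invw u), app_assoc with (l := posw v').
    now apply rrev1_context, rrev1_rev.
Qed.

Lemma rstep1_rstep (w w' : list (sletter S)) : rstep1 R w w' -> rstep R w w'.
Proof.
  intros [a b s | a b s t u' v' Hrel].
  - apply rstep_del; discriminate.
  - apply rstep_rev; [discriminate | discriminate | exact Hrel].
Qed.

End LetterReversing.

Theorem lemma1p4 (S : Type) (R : list S * list S -> Prop)
  (HR : positive_presentation R) :
  forall w w' : list (sletter S), rrev1 R w w' <-> rrev R w w'.
Proof.
  intros w w'; split; apply clos_refl_trans_incl; intros x y Hxy.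
  - apply rt_step, rstep1_rstep, Hxy.
  - apply rstep_rrev1, Hxy.
Qed.
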